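(* Let $\mathcal{X}=\{x_k\}_{k=1}^\infty$ be a frame for the complex Hilbert space $\ell_2$. The following are equivalent: (1) $\mathcal{X}$ is injective; (2) $\overline{\mathrm{span}}\{\tilde{x}_k\}_{k=1}^\infty=\tilde{\mathbb{H}}$.
   Context: A family $\{x_k\}$ is called injective if whenever a Hilbert–Schmidt self-adjoint operator $T$ on $\ell_2$ satisfies $\langle Tx_k,x_k\rangle=0$ for all $k$, then $T=0$. Let $\tilde{\mathbb{H}}=\left(\sum_{i=1}^\infty\oplus\ell_2\right)_{\ell_2}$ be the $\ell_2$-direct sum of countably many copies of real $\ell_2$, with elements $(\vec{x}_1,\vec{x}_2,\dots)$ and inner product $\sum_i\langle\vec{x}_i,\vec{y}_i\rangle$. For $x=(x_i)_{i=1}^\infty\in\ell_2$ (complex), define $\tilde{x}=(\vec{x}_1,\vec{x}_2,\dots)\in\tilde{\mathbb{H}}$ with $\vec{x}_n=(|x_n|^2,\mathrm{Re}(\bar{x}_nx_{n+1}),\mathrm{Im}(\bar{x}_nx_{n+1}),\mathrm{Re}(\bar{x}_nx_{n+2}),\mathrm{Im}(\bar{x}_nx_{n+2}),\dots)$. *)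

From Stdlib Require Import Reals.
From Coquelicot Require Import Coquelicot.
Open Scope R_scope.

Definition Cseries (a : nat -> C) : C :=
  (Series (fun n => Re (a n)), Series (fun n => Im (a n))).

Definition is_l2 (x : nat -> C) : Prop :=
  ex_series (fun i => (Cmod (x i)) ^ 2).

Definition l2norm2 (x : nat -> C) : R := Series (fun i => (Cmod (x i)) ^ 2).

Definition l2inner (x y : nat -> C) : C :=
  Cseries (fun i => Cmult (x i) (Cconj (y i))).

Definition is_frame (X : nat -> (nat -> C)) : Prop :=
  (forall k, is_l2 (X k)) /\
  exists A B : R, 0 < A /\ 0 < B /\
    forall x, is_l2 x ->
      ex_series (fun k => (Cmod (l2inner x (X k))) ^ 2) /\
      A * l2norm2 x <= Series (fun k => (Cmod (l2inner x (X k))) ^ 2) /\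
      Series (fun k => (Cmod (l2inner x (X k))) ^ 2) <= B * l2norm2 x.

(** Hilbert–Schmidt operators on l2, given by their matrix
    T i j = <T e_j, e_i> in the standard basis: square-summable matrices. *)
Definition is_HS (T : nat -> nat -> C) : Prop :=
  (forall i, ex_series (fun j => (Cmod (T i j)) ^ 2)) /\
  ex_series (fun i => Series (fun j => (Cmod (T i j)) ^ 2)).

Definition is_selfadjoint (T : nat -> nat -> C) : Prop :=
  forall i j, T i j = Cconj (T j i).

Definition op_apply (T : nat -> nat -> C) (x : nat -> C) : nat -> C :=
  fun i => Cseries (fun j => Cmult (T i j) (x j)).

Definition injective_family (X : nat -> (nat -> C)) : Prop :=
  forall T : nat -> nat -> C, is_HS T -> is_selfadjoint T ->
    (forall k, l2inner (op_apply T (X k)) (X k) = 0%C) ->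
    forall i j, T i j = 0%C.

(** The real Hilbert space Htilde = (sum_i (+) l2)_{l2}: elements are
    double sequences v n m (n-th block, m-th coordinate). *)
Definition in_Htilde (v : nat -> nat -> R) : Prop :=
  (forall n, ex_series (fun m => (v n m) ^ 2)) /\
  ex_series (fun n => Series (fun m => (v n m) ^ 2)).

Definition Htilde_norm (v : nat -> nat -> R) : R :=
  sqrt (Series (fun n => Series (fun m => (v n m) ^ 2))).

(** x~ : block n (0-indexed) is
    (|x_n|^2, Re(conj x_n x_{n+1}), Im(conj x_n x_{n+1}),
              Re(conj x_n x_{n+2}), Im(conj x_n x_{n+2}), ...). *)
Definition tilde (x : nat -> C) (n m : nat) : R :=
  match m with
  | O => (Cmod (x n)) ^ 2
  | S _ =>
      let p := Nat.div (m + 1) 2 in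
      if Nat.odd m then Re (Cmult (Cconj (x n)) (x (n + p)%nat))
      else Im (Cmult (Cconj (x n)) (x (n + p)%nat))
  end.

(** closed (real) linear span of a family in Htilde is all of Htilde:
    every element is a norm-limit of finite real linear combinations. *)
Definition dense_span_Htilde (Y : nat -> (nat -> nat -> R)) : Prop :=
  forall v, in_Htilde v -> forall eps : R, 0 < eps ->
    exists (N : nat) (c : nat -> R),
      Htilde_norm (fun n m => v n m - sum_n (fun k => c k * Y k n m) N) < eps.

(* The map [hs_vec] identifies self-adjoint Hilbert-Schmidt matrices with the real Hilbert
   space [Htilde] and turns the quadratic form into an inner product:
   [<T x, x> = <hs_vec T, tilde x>], the factor 2 in the off-diagonal coordinates of
   [hs_vec T] accounting for the pair [T i j], [T j i = conj (T i j)].  Hence [X] is injective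
   iff no nonzero vector of [Htilde] is orthogonal to every [tilde (X k)], and since [Htilde]
   is complete, the projection theorem makes this equivalent to the density of their span. *)

From Stdlib Require Import Reals Lra Lia FunctionalExtensionality ClassicalEpsilon Classical.
From Coquelicot Require Import Coquelicot.
Open Scope R_scope.

(* [fsum f n] has the [n] terms [f 0 + ... + f (n-1)], unlike [sum_n f n]. *)
Fixpoint fsum (f : nat -> R) (n : nat) : R :=
  match n with O => 0 | S n => fsum f n + f n end.

Lemma fsum_ext f g n : (forall i, (i < n)%nat -> f i = g i) -> fsum f n = fsum g n.
Proof.
  induction n as [|n IH]; simpl; intros H; auto.
  rewrite IH by (intros; apply H; lia).
  rewrite H by lia; auto.
Qed.

Lemma fsum_plus f g n : fsum (fun i => f i + g i) n = fsum f n + fsum g n.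
Proof. induction n as [|n IH]; simpl; [|rewrite IH]; lra. Qed.

Lemma fsum_scal_l c f n : fsum (fun i => c * f i) n = c * fsum f n.
Proof. induction n as [|n IH]; simpl; [|rewrite IH]; lra. Qed.

Lemma fsum_const c n : fsum (fun _ => c) n = INR n * c.
Proof. induction n as [|n IH]; simpl fsum; [simpl|rewrite IH, S_INR]; lra. Qed.

Lemma fsum_le f g n : (forall i, (i < n)%nat -> f i <= g i) -> fsum f n <= fsum g n.
Proof.
  induction n as [|n IH]; simpl; intros H; [lra|].
  assert (fsum f n <= fsum g n) by (apply IH; intros; apply H; lia).
  assert (f n <= g n) by (apply H; lia).
  lra.
Qed.

Lemma fsum_nonneg f n : (forall i, (i < n)%nat -> 0 <= f i) -> 0 <= fsum f n.
Proof.
  intros H. rewrite <- (Rmult_0_r (INR n)), <- fsum_const.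
  apply fsum_le; auto.
Qed.

Lemma fsum_Rabs f n : Rabs (fsum f n) <= fsum (fun i => Rabs (f i)) n.
Proof.
  induction n as [|n IH]; simpl; [rewrite Rabs_R0; lra|].
  eapply Rle_trans; [apply Rabs_triang|lra].
Qed.

Lemma fsum_add_len f n d : fsum f (n + d) = fsum f n + fsum (fun i => f (n + i)%nat) d.
Proof.
  induction d as [|d IH]; simpl; [rewrite Nat.add_0_r; lra|].
  rewrite Nat.add_succ_r; simpl; rewrite IH; lra.
Qed.

Lemma fsum_le_len f n m : (forall i, 0 <= f i) -> (n <= m)%nat -> fsum f n <= fsum f m.
Proof.
  intros H Hnm. replace m with (n + (m - n))%nat by lia. rewrite fsum_add_len.
  assert (0 <= fsum (fun i => f (n + i)%nat) (m - n)) by (apply fsum_nonneg; auto).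
  lra.
Qed.

Lemma sum_n_fsum f N : sum_n f N = fsum f (S N).
Proof.
  rewrite sum_n_Reals.
  induction N as [|N IH]; simpl; [lra|rewrite IH; simpl; lra].
Qed.

Lemma is_lim_seq_fsum (u : nat -> nat -> R) (l : nat -> R) n :
  (forall i, (i < n)%nat -> is_lim_seq (u i) (l i)) ->
  is_lim_seq (fun M => fsum (fun i => u i M) n) (fsum l n).
Proof.
  induction n as [|n IH]; simpl; intros H; [apply is_lim_seq_const|].
  apply is_lim_seq_plus'; [apply IH; intros i Hi|]; apply H; lia.
Qed.

Lemma fsum_odd_len h L :
  fsum h (2 * L + 1) = h 0%nat + fsum (fun p => h (2 * p + 1)%nat + h (2 * p + 2)%nat) L.
Proof.
  induction L as [|L IH]; [simpl; lra|].
  replace (2 * S L + 1)%nat with (S (S (2 * L + 1))) by lia.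
  cbn [fsum]. rewrite IH.
  replace (S (2 * L + 1)) with (2 * L + 2)%nat by lia.
  lra.
Qed.

(* Row [n] of the right-hand side collects the diagonal entry [(n, n)] and the pairs
   [(n, n+1+p)], [(n+1+p, n)] to the right of it. *)
Lemma fsum_square_diag (g : nat -> nat -> R) N :
  fsum (fun i => fsum (fun j => g i j) N) N =
  fsum (fun n => g n n + fsum (fun p => g n (n + 1 + p)%nat + g (n + 1 + p)%nat n) (N - 1 - n)) N.
Proof.
  induction N as [|N IH]; [reflexivity|].
  cbn [fsum]. replace (S N - 1 - N)%nat with 0%nat by lia.
  rewrite (fsum_ext
     (fun n => g n n + fsum (fun p => g n (n + 1 + p)%nat + g (n + 1 + p)%nat n) (S N - 1 - n))
     (fun n => (g n n + fsum (fun p => g n (n + 1 + p)%nat + g (n + 1 + p)%nat n) (N - 1 - n))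
               + (g n N + g N n))).
  - rewrite fsum_plus, IH, (fsum_plus _ (fun n => g n N + g N n)), (fsum_plus (fun n => g n N)).
    change (fsum (g N) N) with (fsum (fun j => g N j) N). simpl. lra.
  - intros i Hi. replace (S N - 1 - i)%nat with (S (N - 1 - i)) by lia. simpl.
    replace (i + 1 + (N - 1 - i))%nat with N by lia. lra.
Qed.

Lemma is_lim_seq_fsum_Series a : ex_series a -> is_lim_seq (fsum a) (Series a).
Proof.
  intros H. apply is_lim_seq_incr_1.
  eapply is_lim_seq_ext; [intros n; apply sum_n_fsum|].
  apply Series_correct, H.
Qed.

Lemma Series_of_lim_fsum a (l : R) : is_lim_seq (fsum a) l -> ex_series a /\ Series a = l.
Proof.
  intros H. apply is_lim_seq_incr_1 in H.
  assert (Hs : is_series a l).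
  { eapply is_lim_seq_ext in H; [exact H|]. intros n. symmetry. apply sum_n_fsum. }
  split; [exists l; exact Hs|apply is_series_unique, Hs].
Qed.

Lemma is_lim_seq_le_R (u v : nat -> R) (l1 l2 : R) :
  (forall n, u n <= v n) -> is_lim_seq u l1 -> is_lim_seq v l2 -> l1 <= l2.
Proof. intros Huv Hu Hv. exact (is_lim_seq_le u v l1 l2 Huv Hu Hv). Qed.

Lemma is_lim_seq_unique_R (u : nat -> R) (l1 l2 : R) : is_lim_seq u l1 -> is_lim_seq u l2 -> l1 = l2.
Proof.
  intros H1 H2. apply is_lim_seq_unique in H1, H2. rewrite H1 in H2. injection H2. auto.
Qed.

Lemma is_lim_seq_ub (u : nat -> R) (l C : R) : (forall n, u n <= C) -> is_lim_seq u l -> l <= C.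
Proof. intros H Hu. exact (is_lim_seq_le_R u _ l C H Hu (is_lim_seq_const C)). Qed.

Lemma is_lim_seq_lb (u : nat -> R) (l C : R) : (forall n, C <= u n) -> is_lim_seq u l -> C <= l.
Proof. intros H Hu. exact (is_lim_seq_le_R _ u C l H (is_lim_seq_const C) Hu). Qed.

Lemma is_lim_seq_inv_S : is_lim_seq (fun n => / INR (S n)) 0.
Proof.
  assert (H : is_lim_seq (fun n => INR (S n)) p_infty).
  { apply (is_lim_seq_incr_1 INR), is_lim_seq_INR. }
  exact (is_lim_seq_inv _ _ H ltac:(discriminate)).
Qed.

Lemma inv_S_pos n : 0 < / INR (S n).
Proof. apply Rinv_0_lt_compat, lt_0_INR; lia. Qed.

Lemma inv_S_le n m : (n <= m)%nat -> / INR (S m) <= / INR (S n).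
Proof. intros H. apply Rinv_le_contravar; [apply lt_0_INR; lia|apply le_INR; lia]. Qed.

Lemma le_of_le_inv_S x A B : (forall j, x <= A + B * / INR (S j)) -> x <= A.
Proof.
  intros H. apply (is_lim_seq_lb (fun j => A + B * / INR (S j))); [exact H|].
  assert (L := is_lim_seq_plus' _ _ A (B * 0) (is_lim_seq_const A)
                 (is_lim_seq_mult' (fun _ => B) _ B 0 (is_lim_seq_const B) is_lim_seq_inv_S)).
  rewrite Rmult_0_r, Rplus_0_r in L. exact L.
Qed.

Lemma fsum_le_Series a n : ex_series a -> (forall i, 0 <= a i) -> fsum a n <= Series a.
Proof.
  intros H Hpos.
  apply (is_lim_seq_lb (fun m => fsum a (m + n))).
  - intros m. apply fsum_le_len; [exact Hpos|lia].
  - apply (is_lim_seq_incr_n (fsum a)), is_lim_seq_fsum_Series, H.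
Qed.

Lemma Series_ge0 a : ex_series a -> (forall i, 0 <= a i) -> 0 <= Series a.
Proof. apply (fsum_le_Series a 0). Qed.

Lemma term_le_Series a k : ex_series a -> (forall i, 0 <= a i) -> a k <= Series a.
Proof.
  intros H Hpos. eapply Rle_trans; [|apply (fsum_le_Series a (S k) H Hpos)].
  simpl. assert (0 <= fsum a k) by (apply fsum_nonneg; auto). lra.
Qed.

Lemma ex_series_of_bounded_fsum a C :
  (forall i, 0 <= a i) -> (forall n, fsum a n <= C) -> ex_series a /\ Series a <= C.
Proof.
  intros Hpos Hb.
  assert (Hg : Un_growing (fsum a)) by (intros n; simpl; specialize (Hpos n); lra).
  assert (Hu : has_ub (fsum a)) by (exists C; intros x [n ->]; auto).
  destruct (growing_cv _ Hg Hu) as [l Hl]. apply is_lim_seq_Reals in Hl.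
  destruct (Series_of_lim_fsum _ _ Hl) as [He Hs].
  split; [exact He|rewrite Hs; exact (is_lim_seq_ub _ _ _ Hb Hl)].
Qed.

Lemma ex_series_Rle (a b : nat -> R) : (forall n, Rabs (a n) <= b n) -> ex_series b -> ex_series a.
Proof. apply (@ex_series_le R_AbsRing R_CompleteNormedModule). Qed.

Lemma ex_series_lin2 f g (al be : R) :
  ex_series f -> ex_series g -> ex_series (fun m => al * f m + be * g m).
Proof.
  intros Hf Hg.
  apply (ex_series_plus (fun m => al * f m) (fun m => be * g m));
    [apply (ex_series_scal_l al f Hf)|apply (ex_series_scal_l be g Hg)].
Qed.

Lemma Series_lin2 f g (al be : R) : ex_series f -> ex_series g ->
  Series (fun m => al * f m + be * g m) = al * Series f + be * Series g.
Proof.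
  intros Hf Hg.
  rewrite (Series_plus (fun m => al * f m) (fun m => be * g m)), !Series_scal_l; [reflexivity| |].
  - apply (ex_series_scal_l al f Hf).
  - apply (ex_series_scal_l be g Hg).
Qed.

Lemma Series_lin3 f g h (al be ga : R) : ex_series f -> ex_series g -> ex_series h ->
  Series (fun m => al * f m + be * g m + ga * h m) = al * Series f + be * Series g + ga * Series h.
Proof.
  intros Hf Hg Hh.
  rewrite (Series_plus (fun m => al * f m + be * g m) (fun m => ga * h m)), Series_lin2, Series_scal_l;
    auto.
  - apply ex_series_lin2; auto.
  - apply (ex_series_scal_l ga h Hh).
Qed.

Lemma series_const0 : ex_series (fun _ : nat => 0) /\ Series (fun _ : nat => 0) = 0.
Proof.
  apply (Series_of_lim_fsum (fun _ => 0) 0).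
  eapply is_lim_seq_ext; [|apply is_lim_seq_const].
  intros n. rewrite fsum_const. ring.
Qed.

Lemma Rabs_Series_minus_fsum a n : ex_series (fun i => Rabs (a i)) ->
  Rabs (Series a - fsum a n) <= Series (fun i => Rabs (a i)) - fsum (fun i => Rabs (a i)) n.
Proof.
  intros Ha. assert (Ha' : ex_series a) by (apply ex_series_Rabs, Ha).
  apply (is_lim_seq_le_R (fun m => Rabs (fsum a (n + m) - fsum a n))
           (fun m => fsum (fun i => Rabs (a i)) (n + m) - fsum (fun i => Rabs (a i)) n)).
  - intros m. rewrite !fsum_add_len.
    replace (fsum a n + fsum (fun i => a (n + i)%nat) m - fsum a n)
      with (fsum (fun i => a (n + i)%nat) m) by ring.
    replace (fsum (fun i => Rabs (a i)) n + fsum (fun i => Rabs (a (n + i)%nat)) m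
             - fsum (fun i => Rabs (a i)) n)
      with (fsum (fun i => Rabs (a (n + i)%nat)) m) by ring.
    apply fsum_Rabs.
  - apply (is_lim_seq_abs _ (Series a - fsum a n)).
    apply is_lim_seq_minus'; [|apply is_lim_seq_const].
    eapply is_lim_seq_ext; [intros m; rewrite Nat.add_comm; reflexivity|].
    apply (is_lim_seq_incr_n (fsum a)), is_lim_seq_fsum_Series, Ha'.
  - apply is_lim_seq_minus'; [|apply is_lim_seq_const].
    eapply is_lim_seq_ext; [intros m; rewrite Nat.add_comm; reflexivity|].
    apply (is_lim_seq_incr_n (fsum _)), is_lim_seq_fsum_Series, Ha.
Qed.

Definition summable2 (g : nat -> nat -> R) : Prop :=
  (forall i, ex_series (g i)) /\ ex_series (fun i => Series (g i)).

Definition abs_summable2 (a : nat -> nat -> R) : Prop := summable2 (fun i j => Rabs (a i j)).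

Lemma summable2_lin2 f g (al be : R) : summable2 f -> summable2 g ->
  summable2 (fun i j => al * f i j + be * g i j).
Proof.
  intros [Hf1 Hf2] [Hg1 Hg2]. split.
  - intros i. apply ex_series_lin2; auto.
  - apply (ex_series_ext (fun i => al * Series (f i) + be * Series (g i))).
    + intros i. symmetry. apply Series_lin2; auto.
    + apply ex_series_lin2; auto.
Qed.

Lemma abs_summable2_summable2 a : abs_summable2 a -> summable2 a.
Proof.
  intros [H1 H2]. split.
  - intros i. apply ex_series_Rabs, H1.
  - eapply ex_series_Rle; [|exact H2]. intros i. apply Series_Rabs, H1.
Qed.

Lemma abs_summable2_le a b : (forall i j, Rabs (a i j) <= b i j) -> summable2 b -> abs_summable2 a.
Proof.
  intros Hab [Hb Hb2].
  assert (Hrow : forall i, ex_series (fun j => Rabs (a i j))).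
  { intros i. apply (ex_series_Rle _ (b i)); [|apply Hb]. intros j. rewrite Rabs_Rabsolu. apply Hab. }
  split; [exact Hrow|].
  eapply ex_series_Rle; [|exact Hb2]. intros i.
  rewrite Rabs_pos_eq by (apply Series_ge0; [apply Hrow|intros; apply Rabs_pos]).
  apply Series_le; [|apply Hb]. intros j. split; [apply Rabs_pos|apply Hab].
Qed.

Lemma fsum2_le_Series2 (g : nat -> nat -> R) N (L : nat -> nat) :
  (forall i j, 0 <= g i j) -> summable2 g ->
  fsum (fun i => fsum (g i) (L i)) N <= Series (fun i => Series (g i)).
Proof.
  intros Hpos [Hrow Hout]. eapply Rle_trans.
  - apply (fsum_le _ (fun i => Series (g i))). intros i _. apply fsum_le_Series; auto.
  - apply fsum_le_Series; [exact Hout|]. intros i. apply Series_ge0; auto.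
Qed.

Lemma summable2_of_bounded_fsum2 (g : nat -> nat -> R) C : (forall i j, 0 <= g i j) ->
  (forall N, fsum (fun i => fsum (g i) N) N <= C) ->
  summable2 g /\ Series (fun i => Series (g i)) <= C.
Proof.
  intros Hpos HC.
  assert (Hrect : forall N M, fsum (fun i => fsum (g i) M) N <= C).
  { intros N M. eapply Rle_trans; [|apply (HC (Nat.max N M))]. eapply Rle_trans.
    - apply (fsum_le _ (fun i => fsum (g i) (Nat.max N M))).
      intros i _. apply fsum_le_len; [apply Hpos|lia].
    - apply (fsum_le_len (fun i => fsum (g i) (Nat.max N M))); [|lia].
      intros i. apply fsum_nonneg; auto. }
  assert (Hrow : forall i, ex_series (g i)).
  { intros i. apply (ex_series_of_bounded_fsum _ C); [apply Hpos|]. intros M.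
    eapply Rle_trans; [|apply (Hrect (S i) M)]. simpl.
    assert (0 <= fsum (fun i0 => fsum (g i0) M) i)
      by (apply fsum_nonneg; intros; apply fsum_nonneg; auto).
    lra. }
  assert (Hout : forall N, fsum (fun i => Series (g i)) N <= C).
  { intros N. apply (is_lim_seq_ub (fun M => fsum (fun i => fsum (g i) M) N)); [apply Hrect|].
    apply is_lim_seq_fsum. intros i _. apply is_lim_seq_fsum_Series, Hrow. }
  destruct (ex_series_of_bounded_fsum (fun i => Series (g i)) C) as [H1 H2]; auto.
  - intros i. apply Series_ge0; auto.
  - split; [split|]; auto.
Qed.

(* Tannery's theorem: dominated convergence for series. *)
Lemma is_lim_seq_fsum_dominated (t : nat -> nat -> R) (r : nat -> R) :
  (forall N i, 0 <= t N i <= r i) -> ex_series r -> (forall i, is_lim_seq (fun N => t N i) 0) ->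
  is_lim_seq (fun N => fsum (t N) N) 0.
Proof.
  intros Htr Hr Ht. apply is_lim_seq_Reals. intros eps Heps.
  pose proof (is_lim_seq_fsum_Series _ Hr) as HrS. apply is_lim_seq_Reals in HrS.
  destruct (HrS (eps / 2)) as [M HM]; [lra|].
  set (d := eps / (2 * (INR M + 1))).
  assert (Hd : 0 < d) by (unfold d; pose proof (pos_INR M); apply Rdiv_lt_0_compat; lra).
  assert (Hhead : forall M', exists N1, forall N, (N1 <= N)%nat -> forall i, (i < M')%nat -> t N i < d).
  { induction M' as [|M' [N1 HN1]]; [exists 0%nat; intros; lia|].
    pose proof (Ht M') as HtM. apply is_lim_seq_Reals in HtM. destruct (HtM d Hd) as [N2 HN2].
    exists (Nat.max N1 N2). intros N HN i Hi.
    destruct (Nat.eq_dec i M') as [->|Hne]; [|apply HN1; lia].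
    specialize (HN2 N ltac:(lia)). unfold R_dist in HN2. apply Rabs_def2 in HN2. lra. }
  destruct (Hhead M) as [N1 HN1].
  exists (Nat.max M N1). intros N HN. unfold R_dist. rewrite Rminus_0_r.
  replace N with (M + (N - M))%nat by lia. rewrite fsum_add_len.
  assert (Hsmall : fsum (t (M + (N - M))%nat) M <= INR M * d).
  { rewrite <- fsum_const. apply fsum_le. intros i Hi. left. apply HN1; lia. }
  assert (Htail : fsum (fun i => t (M + (N - M))%nat (M + i)%nat) (N - M)
                  <= fsum (fun i => r (M + i)%nat) (N - M)).
  { apply fsum_le. intros i _. apply Htr. }
  assert (Hr_tail : fsum r M + fsum (fun i => r (M + i)%nat) (N - M) <= Series r).
  { rewrite <- fsum_add_len. apply fsum_le_Series; [exact Hr|]. intros i.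
    apply (Rle_trans _ _ _ (proj1 (Htr 0%nat i))), Htr. }
  assert (HrM : Rabs (fsum r M - Series r) < eps / 2) by (apply HM; lia).
  assert (HMd : INR M * d < eps / 2).
  { unfold d. pose proof (pos_INR M). apply (Rmult_lt_reg_r (2 * (INR M + 1))); [lra|].
    field_simplify; [nra|lra]. }
  assert (Hnn : 0 <= fsum (t (M + (N - M))%nat) M
                     + fsum (fun i => t (M + (N - M))%nat (M + i)%nat) (N - M)).
  { rewrite <- fsum_add_len. apply fsum_nonneg. intros i _. apply Htr. }
  apply Rabs_def2 in HrM. rewrite Rabs_pos_eq by exact Hnn. lra.
Qed.

Lemma is_lim_seq_fsum2 (a : nat -> nat -> R) (K : nat -> nat -> nat) : abs_summable2 a ->
  (forall i, filterlim (fun N => K N i) eventually eventually) ->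
  is_lim_seq (fun N => fsum (fun i => fsum (a i) (K N i)) N) (Series (fun i => Series (a i))).
Proof.
  intros Ha HK. destruct (abs_summable2_summable2 _ Ha) as [Hrow Hout].
  destruct Ha as [Hra Hoa].
  set (s := fun i => Series (a i)).
  set (t := fun N i => Series (fun j => Rabs (a i j)) - fsum (fun j => Rabs (a i j)) (K N i)).
  assert (Ht : is_lim_seq (fun N => fsum (t N) N) 0).
  { apply (is_lim_seq_fsum_dominated t (fun i => Series (fun j => Rabs (a i j)))); [|exact Hoa|].
    - intros N i. unfold t.
      assert (0 <= fsum (fun j => Rabs (a i j)) (K N i)) by (apply fsum_nonneg; intros; apply Rabs_pos).
      assert (fsum (fun j => Rabs (a i j)) (K N i) <= Series (fun j => Rabs (a i j)))
        by (apply fsum_le_Series; [apply Hra|intros; apply Rabs_pos]).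
      lra.
    - intros i. unfold t.
      replace 0 with (Series (fun j => Rabs (a i j)) - Series (fun j => Rabs (a i j))) by ring.
      apply is_lim_seq_minus'; [apply is_lim_seq_const|].
      apply (is_lim_seq_subseq (fsum (fun j => Rabs (a i j))) _ (fun N => K N i) (HK i)).
      apply is_lim_seq_fsum_Series, Hra. }
  assert (Herr : forall N, Rabs (fsum (fun i => fsum (a i) (K N i) - s i) N) <= fsum (t N) N).
  { intros N. eapply Rle_trans; [apply fsum_Rabs|]. apply fsum_le. intros i _.
    rewrite Rabs_minus_sym. apply Rabs_Series_minus_fsum, Hra. }
  replace (Series s) with (Series s + 0) by ring.
  eapply is_lim_seq_ext.
  { intros N. symmetry.
    replace (fsum (fun i => fsum (a i) (K N i)) N)
      with (fsum s N + fsum (fun i => fsum (a i) (K N i) - s i) N).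
    - reflexivity.
    - rewrite <- fsum_plus. apply fsum_ext. intros. ring. }
  apply is_lim_seq_plus'; [apply is_lim_seq_fsum_Series, Hout|].
  apply (is_lim_seq_le_le (fun N => - fsum (t N) N) _ (fun N => fsum (t N) N)).
  - intros N. specialize (Herr N). apply Rabs_le_between in Herr. lra.
  - replace (Finite 0) with (Rbar_opp 0) by (simpl; f_equal; ring).
    exact (proj1 (is_lim_seq_opp _ _) Ht).
  - exact Ht.
Qed.

Lemma Series2_eq_lim_diag (a : nat -> nat -> R) (l : R) : abs_summable2 a ->
  is_lim_seq (fun N => fsum (fun n => a n n + fsum (fun p => a n (n + 1 + p)%nat + a (n + 1 + p)%nat n)
                                              (N - 1 - n)) N) l ->
  Series (fun i => Series (a i)) = l.
Proof.
  intros Ha Hl.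
  apply (is_lim_seq_unique_R _ _ _ (is_lim_seq_fsum2 a (fun N _ => N) Ha (fun _ => filterlim_id _ _))).
  eapply is_lim_seq_ext; [|exact Hl]. intros N. symmetry. apply fsum_square_diag.
Qed.

(** * The real Hilbert space [Htilde] *)

Definition Hnorm2 (v : nat -> nat -> R) : R := Series (fun n => Series (fun m => v n m ^ 2)).

Definition Hinner (u v : nat -> nat -> R) : R := Series (fun n => Series (fun m => u n m * v n m)).

Lemma dseq_ext (u u' : nat -> nat -> R) : (forall n m, u n m = u' n m) -> u = u'.
Proof. intros H. do 2 (apply functional_extensionality; intros). apply H. Qed.

Lemma in_Htilde_ext u u' : (forall n m, u n m = u' n m) -> in_Htilde u -> in_Htilde u'.
Proof. intros H. rewrite (dseq_ext u u' H). auto. Qed.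

Lemma Hnorm2_ext u u' : (forall n m, u n m = u' n m) -> Hnorm2 u = Hnorm2 u'.
Proof. intros H. rewrite (dseq_ext u u' H). auto. Qed.

Lemma in_Htilde_le v b : (forall n m, v n m ^ 2 <= b n m) -> summable2 b -> in_Htilde v.
Proof.
  intros Hvb Hb. apply (abs_summable2_summable2 (fun n m => v n m ^ 2)).
  apply (abs_summable2_le _ b); [|exact Hb].
  intros n m. rewrite Rabs_pos_eq by apply pow2_ge_0. apply Hvb.
Qed.

Lemma in_Htilde_0 : in_Htilde (fun _ _ => 0).
Proof.
  destruct series_const0 as [Z1 Z2]. split.
  - intros n. apply (ex_series_ext (fun _ => 0)); [intros; simpl; ring|exact Z1].
  - apply (ex_series_ext (fun _ => 0)); [|exact Z1].
    intros n. rewrite (Series_ext _ (fun _ => 0)) by (intros; simpl; ring). symmetry. exact Z2.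
Qed.

Lemma in_Htilde_lin u v a b : in_Htilde u -> in_Htilde v ->
  in_Htilde (fun n m => a * u n m + b * v n m).
Proof.
  intros Hu Hv. apply (in_Htilde_le _ (fun n m => 2 * a ^ 2 * u n m ^ 2 + 2 * b ^ 2 * v n m ^ 2)).
  - intros n m. pose proof (pow2_ge_0 (a * u n m - b * v n m)). nra.
  - apply summable2_lin2; [exact Hu|exact Hv].
Qed.

Lemma in_Htilde_sub u v : in_Htilde u -> in_Htilde v -> in_Htilde (fun n m => u n m - v n m).
Proof.
  intros Hu Hv. apply (in_Htilde_ext (fun n m => 1 * u n m + (-1) * v n m)); [intros; ring|].
  apply in_Htilde_lin; auto.
Qed.

Lemma abs_summable2_mul u v : in_Htilde u -> in_Htilde v -> abs_summable2 (fun n m => u n m * v n m).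
Proof.
  intros Hu Hv. apply (abs_summable2_le _ (fun n m => / 2 * u n m ^ 2 + / 2 * v n m ^ 2)).
  - intros n m. rewrite Rabs_mult, <- (pow2_abs (u n m)), <- (pow2_abs (v n m)).
    pose proof (pow2_ge_0 (Rabs (u n m) - Rabs (v n m))). nra.
  - apply summable2_lin2; [exact Hu|exact Hv].
Qed.

Lemma Hnorm2_lin u v a b : in_Htilde u -> in_Htilde v ->
  Hnorm2 (fun n m => a * u n m + b * v n m)
  = a ^ 2 * Hnorm2 u + 2 * a * b * Hinner u v + b ^ 2 * Hnorm2 v.
Proof.
  intros Hu Hv. destruct (abs_summable2_summable2 _ (abs_summable2_mul u v Hu Hv)) as [Huv1 Huv2].
  destruct Hu as [Hu1 Hu2], Hv as [Hv1 Hv2]. unfold Hnorm2, Hinner.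
  rewrite <- Series_lin3 by auto. apply Series_ext. intros n.
  rewrite <- Series_lin3 by auto. apply Series_ext. intros m. ring.
Qed.

Lemma Hinner_lin_r u v w a b : in_Htilde u -> in_Htilde v -> in_Htilde w ->
  Hinner u (fun n m => a * v n m + b * w n m) = a * Hinner u v + b * Hinner u w.
Proof.
  intros Hu Hv Hw.
  destruct (abs_summable2_summable2 _ (abs_summable2_mul u v Hu Hv)) as [H1 H2].
  destruct (abs_summable2_summable2 _ (abs_summable2_mul u w Hu Hw)) as [H3 H4].
  unfold Hinner. rewrite <- Series_lin2 by auto. apply Series_ext. intros n.
  rewrite <- Series_lin2 by auto. apply Series_ext. intros m. ring.
Qed.

Lemma Hnorm2_scal u c : Hnorm2 (fun n m => c * u n m) = c ^ 2 * Hnorm2 u.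
Proof.
  unfold Hnorm2. rewrite <- Series_scal_l. apply Series_ext. intros n.
  rewrite <- Series_scal_l. apply Series_ext. intros m. ring.
Qed.

Lemma sqr_le_Hnorm2 u n m : in_Htilde u -> u n m ^ 2 <= Hnorm2 u.
Proof.
  intros [H1 H2].
  assert (u n m ^ 2 <= Series (fun m => u n m ^ 2))
    by (apply (term_le_Series (fun m => u n m ^ 2)); [apply H1|intros; apply pow2_ge_0]).
  assert (Series (fun m => u n m ^ 2) <= Hnorm2 u).
  { apply (term_le_Series (fun n => Series (fun m => u n m ^ 2))); [exact H2|].
    intros i. apply Series_ge0; [apply H1|intros; apply pow2_ge_0]. }
  lra.
Qed.

Lemma Hnorm2_ge0 v : in_Htilde v -> 0 <= Hnorm2 v.
Proof. intros Hv. apply (Rle_trans _ _ _ (pow2_ge_0 (v 0%nat 0%nat))), sqr_le_Hnorm2, Hv. Qed.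

Lemma Hnorm2_eq0 v : in_Htilde v -> Hnorm2 v = 0 -> forall n m, v n m = 0.
Proof.
  intros Hv H0 n m. pose proof (sqr_le_Hnorm2 v n m Hv). pose proof (pow2_ge_0 (v n m)).
  destruct (Req_dec (v n m) 0) as [E|E]; [exact E|]. pose proof (pow_nonzero _ 2 E). lra.
Qed.

Lemma Htilde_norm_lt_iff v eps : in_Htilde v -> 0 < eps ->
  (Htilde_norm v < eps <-> Hnorm2 v < eps ^ 2).
Proof.
  intros Hv Heps. unfold Htilde_norm. fold (Hnorm2 v). pose proof (Hnorm2_ge0 v Hv) as Hnn.
  rewrite <- (sqrt_pow2 eps) at 1 by lra. split.
  - apply sqrt_lt_0_alt.
  - intros Hlt. apply sqrt_lt_1_alt. lra.
Qed.

(* [2 <a, b> <= al |a|^2 + |b|^2 / al], from [|al a - b|^2 >= 0]. *)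
Lemma Hnorm2_add_le a b al : in_Htilde a -> in_Htilde b -> 0 < al ->
  Hnorm2 (fun n m => a n m + b n m) <= (1 + al) * Hnorm2 a + (1 + / al) * Hnorm2 b.
Proof.
  intros Ha Hb Hal.
  rewrite (Hnorm2_ext _ (fun n m => 1 * a n m + 1 * b n m)), Hnorm2_lin by (auto; intros; ring).
  assert (H0 : 0 <= Hnorm2 (fun n m => al * a n m + (-1) * b n m))
    by (apply Hnorm2_ge0, in_Htilde_lin; auto).
  rewrite Hnorm2_lin in H0 by auto.
  assert (H1 : 2 * Hinner a b <= al * Hnorm2 a + / al * Hnorm2 b).
  { apply (Rmult_le_reg_l al); [exact Hal|].
    rewrite Rmult_plus_distr_l, <- (Rmult_assoc al (/ al)), Rinv_r by lra. lra. }
  lra.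
Qed.

Lemma Hnorm2_sub_orth u v : in_Htilde u -> in_Htilde v -> Hinner u v = 0 ->
  Hnorm2 (fun n m => u n m - v n m) = Hnorm2 u + Hnorm2 v.
Proof.
  intros Hu Hv Huv.
  rewrite (Hnorm2_ext _ (fun n m => 1 * u n m + (-1) * v n m)), Hnorm2_lin, Huv by (auto; intros; ring).
  ring.
Qed.

Definition lincomb (Y : nat -> nat -> nat -> R) (c : nat -> R) (N : nat) : nat -> nat -> R :=
  fun n m => fsum (fun k => c k * Y k n m) N.

Definition in_span (Y : nat -> nat -> nat -> R) (u : nat -> nat -> R) : Prop :=
  exists c N, u = lincomb Y c N.

Definition truncate (c : nat -> R) (N k : nat) : R := if Nat.ltb k N then c k else 0.

Section Span.

Variable Y : nat -> nat -> nat -> R.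

Lemma lincomb_truncate c N M : (N <= M)%nat ->
  forall n m, lincomb Y (truncate c N) M n m = lincomb Y c N n m.
Proof.
  intros H n m. unfold lincomb. replace M with (N + (M - N))%nat by lia. rewrite fsum_add_len.
  rewrite (fsum_ext (fun i => truncate c N (N + i) * Y (N + i)%nat n m) (fun _ => 0)).
  - rewrite fsum_const, Rmult_0_r, Rplus_0_r. apply fsum_ext. intros i Hi.
    unfold truncate. destruct (Nat.ltb_spec i N); [auto|lia].
  - intros i _. unfold truncate. destruct (Nat.ltb_spec (N + i) N); [lia|ring].
Qed.

Lemma lincomb_sum_n c N : exists c', forall n m, lincomb Y c N n m = sum_n (fun k => c' k * Y k n m) N.
Proof.
  exists (truncate c N). intros n m. rewrite sum_n_fsum. simpl.
  unfold truncate at 2. rewrite Nat.ltb_irrefl, <- (lincomb_truncate c N N) by lia.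
  unfold lincomb. ring.
Qed.

Lemma in_span_lin u1 u2 a b :
  in_span Y u1 -> in_span Y u2 -> in_span Y (fun n m => a * u1 n m + b * u2 n m).
Proof.
  intros [c1 [N1 ->]] [c2 [N2 ->]].
  exists (fun k => a * truncate c1 N1 k + b * truncate c2 N2 k), (Nat.max N1 N2).
  apply dseq_ext. intros n m.
  rewrite <- (lincomb_truncate c1 N1 (Nat.max N1 N2)), <- (lincomb_truncate c2 N2 (Nat.max N1 N2))
    by lia.
  unfold lincomb. rewrite <- !fsum_scal_l, <- fsum_plus. apply fsum_ext. intros; ring.
Qed.

Lemma in_span_gen k : in_span Y (Y k).
Proof.
  exists (fun j => if Nat.eqb j k then 1 else 0), (S k). apply dseq_ext. intros n m.
  unfold lincomb. simpl. rewrite Nat.eqb_refl.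
  rewrite (fsum_ext _ (fun _ => 0)); [rewrite fsum_const; ring|].
  intros i Hi. destruct (Nat.eqb_spec i k); [lia|ring].
Qed.

Lemma in_span_0 : in_span Y (fun _ _ => 0).
Proof. exists (fun _ => 0), 0%nat. reflexivity. Qed.

Hypothesis HY : forall k, in_Htilde (Y k).

Lemma lincomb_in_Htilde c N : in_Htilde (lincomb Y c N).
Proof.
  induction N as [|N IH]; [exact in_Htilde_0|].
  apply (in_Htilde_ext (fun n m => 1 * lincomb Y c N n m + c N * Y N n m)).
  - intros. unfold lincomb. simpl. ring.
  - apply in_Htilde_lin; auto.
Qed.

Lemma in_span_in_Htilde u : in_span Y u -> in_Htilde u.
Proof. intros [c [N ->]]. apply lincomb_in_Htilde. Qed.

Lemma Hinner_lincomb v c N : in_Htilde v ->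
  Hinner v (lincomb Y c N) = fsum (fun k => c k * Hinner v (Y k)) N.
Proof.
  intros Hv. induction N as [|N IH].
  - unfold Hinner. simpl. rewrite (Series_ext _ (fun _ => 0)); [apply series_const0|].
    intros n. rewrite (Series_ext _ (fun _ => 0)); [apply series_const0|]. intros. unfold lincomb.
    simpl. ring.
  - rewrite (dseq_ext (lincomb Y c (S N)) (fun n m => 1 * lincomb Y c N n m + c N * Y N n m))
      by (intros; unfold lincomb; simpl; ring).
    rewrite Hinner_lin_r, IH by (auto; apply lincomb_in_Htilde). simpl. ring.
Qed.

End Span.

(** * Completeness and orthogonal complements *)

Lemma Htilde_complete (r : nat -> nat -> nat -> R) (e : nat -> R) :
  (forall j, in_Htilde (r j)) -> is_lim_seq e 0 ->
  (forall N i j, (N <= i)%nat -> (N <= j)%nat -> Hnorm2 (fun n m => r i n m - r j n m) <= e N) ->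
  exists w, in_Htilde w /\ forall j, Hnorm2 (fun n m => w n m - r j n m) <= e j.
Proof.
  intros Hr He HC.
  assert (Hcauchy : forall n m, Cauchy_crit (fun i => r i n m)).
  { intros n m eps Heps. apply is_lim_seq_Reals in He.
    destruct (He (eps ^ 2)) as [N HN]; [apply pow_lt; lra|].
    exists N. intros i j Hi Hj. unfold R_dist.
    specialize (HN N (le_n N)). unfold R_dist in HN. apply Rabs_def2 in HN.
    assert (Hsq : (r i n m - r j n m) ^ 2 < eps ^ 2).
    { eapply Rle_lt_trans; [apply (sqr_le_Hnorm2 (fun n m => r i n m - r j n m)), in_Htilde_sub; auto|].
      eapply Rle_lt_trans; [apply HC; eauto|lra]. }
    rewrite <- (Rabs_pos_eq eps) by lra. apply Rsqr_lt_abs_0. unfold Rsqr. simpl in Hsq. lra. }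
  set (w := fun n m => proj1_sig (Rcomplete.R_complete _ (Hcauchy n m))).
  assert (Hw : forall n m, is_lim_seq (fun i => r i n m) (w n m)).
  { intros n m. apply is_lim_seq_Reals. unfold w. destruct (Rcomplete.R_complete _ _); auto. }
  assert (Hj : forall j, in_Htilde (fun n m => w n m - r j n m) /\
                         Hnorm2 (fun n m => w n m - r j n m) <= e j).
  { intros j.
    apply (summable2_of_bounded_fsum2 (fun n m => (w n m - r j n m) ^ 2)); [intros; apply pow2_ge_0|].
    intros N.
    apply (is_lim_seq_ub (fun i => fsum (fun n => fsum (fun m => (r (i + j)%nat n m - r j n m) ^ 2) N) N)).
    - intros i. eapply Rle_trans; [|apply (HC j (i + j)%nat j); lia].
      apply (fsum2_le_Series2 (fun n m => (r (i + j)%nat n m - r j n m) ^ 2));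
        [intros; apply pow2_ge_0|].
      apply in_Htilde_sub; auto.
    - apply is_lim_seq_fsum. intros n _. apply is_lim_seq_fsum. intros m _.
      assert (L : is_lim_seq (fun i => r (i + j)%nat n m - r j n m) (w n m - r j n m)).
      { apply is_lim_seq_minus'; [|apply is_lim_seq_const].
        apply (is_lim_seq_incr_n (fun i => r i n m)), Hw. }
      replace ((w n m - r j n m) ^ 2) with ((w n m - r j n m) * (w n m - r j n m)) by ring.
      apply (is_lim_seq_ext (fun i => (r (i + j)%nat n m - r j n m) * (r (i + j)%nat n m - r j n m)));
        [intros; ring|].
      apply is_lim_seq_mult'; exact L. }
  exists w. split; [|intros j; apply Hj].
  apply (in_Htilde_ext (fun n m => 1 * (w n m - r 0%nat n m) + 1 * r 0%nat n m)); [intros; ring|].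
  apply in_Htilde_lin; [apply Hj|apply Hr].
Qed.

Lemma exists_inf (P : R -> Prop) : (exists x, P x) -> (forall x, P x -> 0 <= x) ->
  exists D, (forall x, P x -> D <= x) /\ (forall d, 0 < d -> exists x, P x /\ x < D + d).
Proof.
  intros [x0 Hx0] Hpos.
  assert (Hb : bound (fun y => P (- y))) by (exists 0; intros y Hy; specialize (Hpos _ Hy); lra).
  assert (Hne : exists y, P (- y)) by (exists (- x0); rewrite Ropp_involutive; exact Hx0).
  destruct (completeness _ Hb Hne) as [s [Hub Hleast]].
  exists (- s). split.
  - intros x Hx. assert (- x <= s) by (apply Hub; rewrite Ropp_involutive; exact Hx). lra.
  - intros d Hd. apply NNPP. intros Hnot.
    assert (s <= s - d); [|lra].
    apply Hleast. intros y Hy. destruct (Rlt_or_le (- y) (- s + d)) as [Hlt|Hle]; [|lra].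
    exfalso. apply Hnot. exists (- y). auto.
Qed.

Lemma Hinner_eq0_of_min w y : in_Htilde w -> in_Htilde y ->
  (forall t, Hnorm2 w <= Hnorm2 (fun n m => w n m + t * y n m)) -> Hinner w y = 0.
Proof.
  intros Hw Hy Hmin. set (B := Hinner w y). set (q := Hnorm2 y).
  assert (Hq : 0 <= q) by (apply Hnorm2_ge0, Hy).
  set (s := / (q + 1)). assert (Hs : 0 < s) by (apply Rinv_0_lt_compat; lra).
  assert (Hsq : s * (q + 1) = 1) by (unfold s; field; lra).
  specialize (Hmin (- B * s)).
  rewrite (Hnorm2_ext (fun n m => w n m + - B * s * y n m)
                      (fun n m => 1 * w n m + (- B * s) * y n m)) in Hmin
    by (intros; ring).
  rewrite Hnorm2_lin in Hmin by auto.
  fold B q in Hmin.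
  (* the choice [t = - B / (q + 1)] makes the first-order term win *)
  assert (H0 : 0 <= (B * B * s) * (s * q - 2)) by nra.
  assert (B * B * s <= 0) by nra.
  nra.
Qed.

Section Approximation.

Variables (a : nat -> nat -> R) (b : nat -> nat -> nat -> R) (C : R).
Hypotheses (Ha : in_Htilde a) (Hb : forall j, in_Htilde (b j))
  (Hab : forall j, Hnorm2 (fun n m => a n m - b j n m) <= C * / INR (S j)).

Lemma Hnorm2_le_of_approx A : (forall j, Hnorm2 (b j) <= A + / INR (S j)) -> Hnorm2 a <= A.
Proof.
  intros HbA.
  assert (Hal : forall al, 0 < al -> Hnorm2 a <= A + al * A).
  { intros al Hal. apply (le_of_le_inv_S _ _ ((1 + al) + (1 + / al) * C)). intros j.
    rewrite (Hnorm2_ext a (fun n m => b j n m + (a n m - b j n m))) by (intros; ring).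
    eapply Rle_trans; [apply (Hnorm2_add_le _ _ al); auto; apply in_Htilde_sub; auto|].
    assert (0 < 1 + / al) by (pose proof (Rinv_0_lt_compat al Hal); lra).
    specialize (HbA j). specialize (Hab j).
    assert ((1 + al) * Hnorm2 (b j) <= (1 + al) * (A + / INR (S j))) by (apply Rmult_le_compat_l; lra).
    assert ((1 + / al) * Hnorm2 (fun n m => a n m - b j n m) <= (1 + / al) * (C * / INR (S j)))
      by (apply Rmult_le_compat_l; lra).
    lra. }
  apply (le_of_le_inv_S _ _ A). intros j. specialize (Hal _ (inv_S_pos j)). lra.
Qed.

Lemma Hnorm2_ge_of_approx A : (forall j, A <= Hnorm2 (b j)) -> A <= Hnorm2 a.
Proof.
  intros HbA.
  assert (Hal : forall al, 0 < al -> A <= Hnorm2 a + al * Hnorm2 a).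
  { intros al Hal. apply (le_of_le_inv_S _ _ ((1 + / al) * C)). intros j.
    eapply Rle_trans; [apply (HbA j)|].
    rewrite (Hnorm2_ext (b j) (fun n m => a n m + (-1) * (a n m - b j n m))) by (intros; ring).
    eapply Rle_trans.
    { apply (Hnorm2_add_le _ _ al); [exact Ha| |exact Hal].
      apply (in_Htilde_ext (fun n m => (-1) * a n m + 1 * b j n m)); [intros; ring|].
      apply in_Htilde_lin; auto. }
    rewrite Hnorm2_scal.
    assert (0 < 1 + / al) by (pose proof (Rinv_0_lt_compat al Hal); lra).
    specialize (Hab j).
    assert ((1 + / al) * ((-1) ^ 2 * Hnorm2 (fun n m => a n m - b j n m))
            <= (1 + / al) * (C * / INR (S j)))
      by (apply Rmult_le_compat_l; lra).
    lra. }
  apply (le_of_le_inv_S _ _ (Hnorm2 a)). intros j. specialize (Hal _ (inv_S_pos j)). lra.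
Qed.

End Approximation.

Section Projection.

Variables (Y : nat -> nat -> nat -> R) (v : nat -> nat -> R).
Hypotheses (HY : forall k, in_Htilde (Y k)) (Hv : in_Htilde v).

(* Parallelogram law, with the midpoint of [u1] and [u2] in the span. *)
Lemma near_min_close D u1 u2 d1 d2 :
  (forall u, in_span Y u -> D <= Hnorm2 (fun n m => v n m - u n m)) ->
  in_span Y u1 -> in_span Y u2 ->
  Hnorm2 (fun n m => v n m - u1 n m) <= D + d1 -> Hnorm2 (fun n m => v n m - u2 n m) <= D + d2 ->
  Hnorm2 (fun n m => (v n m - u1 n m) - (v n m - u2 n m)) <= 2 * d1 + 2 * d2.
Proof.
  intros HD Hu1 Hu2 H1 H2.
  assert (Hr1 : in_Htilde (fun n m => v n m - u1 n m))
    by (apply in_Htilde_sub; [|eapply in_span_in_Htilde]; eauto).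
  assert (Hr2 : in_Htilde (fun n m => v n m - u2 n m))
    by (apply in_Htilde_sub; [|eapply in_span_in_Htilde]; eauto).
  assert (Hmid := HD _ (in_span_lin Y _ _ (/ 2) (/ 2) Hu1 Hu2)).
  rewrite (Hnorm2_ext _ (fun n m => / 2 * (v n m - u1 n m) + / 2 * (v n m - u2 n m))), Hnorm2_lin in Hmid
    by (auto; intros; field).
  rewrite (Hnorm2_ext _ (fun n m => 1 * (v n m - u1 n m) + (-1) * (v n m - u2 n m))), Hnorm2_lin
    by (auto; intros; ring).
  lra.
Qed.

Lemma exists_minimizing_seq : exists D (u : nat -> nat -> nat -> R),
  (forall u', in_span Y u' -> D <= Hnorm2 (fun n m => v n m - u' n m)) /\
  forall j, in_span Y (u j) /\ Hnorm2 (fun n m => v n m - u j n m) < D + / INR (S j).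
Proof.
  destruct (exists_inf (fun x => exists u, in_span Y u /\ x = Hnorm2 (fun n m => v n m - u n m)))
    as [D [HD Happrox]].
  - exists (Hnorm2 (fun n m => v n m - 0)), (fun _ _ => 0). split; [apply in_span_0|reflexivity].
  - intros x [u [Hu ->]]. apply Hnorm2_ge0, in_Htilde_sub; [|eapply in_span_in_Htilde]; eauto.
  - destruct (choice (fun j u => in_span Y u /\ Hnorm2 (fun n m => v n m - u n m) < D + / INR (S j)))
      as [u Hu].
    + intros j. destruct (Happrox _ (inv_S_pos j)) as [x [[u [Hu ->]] Hlt]]. eauto.
    + exists D, u. split; [|exact Hu]. intros u' Hu'. apply HD. eauto.
Qed.

(* [w] is [v] minus its orthogonal projection onto the closed span of [Y]. *)
Lemma exists_projection : exists w, in_Htilde w /\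
  (forall k t, Hnorm2 w <= Hnorm2 (fun n m => w n m + t * Y k n m)) /\
  (forall A, (forall u, in_span Y u -> A <= Hnorm2 (fun n m => v n m - u n m)) -> A <= Hnorm2 w).
Proof.
  destruct exists_minimizing_seq as [D [u [HD Hu]]].
  set (r := fun j n m => v n m - u j n m).
  assert (Hr : forall j, in_Htilde (r j)).
  { intros j. apply in_Htilde_sub; [|eapply in_span_in_Htilde]; eauto. apply Hu. }
  destruct (Htilde_complete r (fun N => 4 * / INR (S N)) Hr) as [w [Hw Hwr]].
  { replace (Finite 0) with (Rbar_mult 4 0) by (simpl; f_equal; ring).
    apply is_lim_seq_scal_l, is_lim_seq_inv_S. }
  { intros N i j Hi Hj. pose proof (inv_S_le _ _ Hi). pose proof (inv_S_le _ _ Hj).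
    eapply Rle_trans; [apply (near_min_close D (u i) (u j) (/ INR (S i)) (/ INR (S j)) HD)|lra];
      first [apply Hu|left; apply Hu]. }
  exists w. split; [exact Hw|split].
  - intros k t. apply (Rle_trans _ D).
    + apply (Hnorm2_le_of_approx w r 4 Hw Hr Hwr). intros j. left. apply Hu.
    + apply (Hnorm2_ge_of_approx _ (fun j n m => r j n m + t * Y k n m) 4).
      * apply (in_Htilde_ext (fun n m => 1 * w n m + t * Y k n m)); [intros; ring|].
        apply in_Htilde_lin; auto.
      * intros j. apply (in_Htilde_ext (fun n m => 1 * r j n m + t * Y k n m)); [intros; ring|].
        apply in_Htilde_lin; auto.
      * intros j. rewrite (Hnorm2_ext _ (fun n m => w n m - r j n m)) by (intros; ring). apply Hwr.
      * intros j. rewrite (Hnorm2_ext _ (fun n m => v n m - (1 * u j n m + (- t) * Y k n m)))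
          by (intros; unfold r; ring).
        apply HD, in_span_lin; [apply Hu|apply in_span_gen].
  - intros A HA. apply (Hnorm2_ge_of_approx w r 4 Hw Hr Hwr).
    intros j. apply HA, Hu.
Qed.

Lemma exists_orthogonal_of_far eps : 0 < eps ->
  (forall u, in_span Y u -> eps ^ 2 <= Hnorm2 (fun n m => v n m - u n m)) ->
  exists w, in_Htilde w /\ 0 < Hnorm2 w /\ forall k, Hinner w (Y k) = 0.
Proof.
  intros Heps Hfar. destruct exists_projection as [w [Hw [Hmin Hdist]]].
  exists w. split; [exact Hw|split].
  - pose proof (Hdist _ Hfar). pose proof (pow_lt eps 2 Heps). lra.
  - intros k. apply Hinner_eq0_of_min; auto.
Qed.

End Projection.

(** * Self-adjoint Hilbert-Schmidt matrices as vectors of [Htilde] *)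

Definition Cnorm2 (z : C) : R := fst z ^ 2 + snd z ^ 2.

Lemma Cnorm2_ge0 z : 0 <= Cnorm2 z.
Proof. unfold Cnorm2. pose proof (pow2_ge_0 (fst z)). pose proof (pow2_ge_0 (snd z)). lra. Qed.

Lemma Cmod_sqr z : Cmod z ^ 2 = Cnorm2 z.
Proof. unfold Cmod. rewrite pow2_sqrt; [reflexivity|apply Cnorm2_ge0]. Qed.

Lemma Cnorm2_conj z : Cnorm2 (Cconj z) = Cnorm2 z.
Proof. destruct z. unfold Cnorm2. simpl. ring. Qed.

Lemma Cnorm2_mult z w : Re (Cmult z w) ^ 2 + Im (Cmult z w) ^ 2 = Cnorm2 z * Cnorm2 w.
Proof. destruct z, w. unfold Cnorm2, Re, Im, Cmult. simpl. ring. Qed.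

Lemma Rabs_le_half_sum x A B : 0 <= A -> 0 <= B -> x ^ 2 <= A * B -> Rabs x <= (A + B) / 2.
Proof.
  intros HA HB H. rewrite <- (Rabs_pos_eq ((A + B) / 2)) by lra. apply Rsqr_le_abs_0. unfold Rsqr.
  pose proof (pow2_ge_0 (A - B)). simpl in H. nra.
Qed.

Lemma Rabs_Re_Im_Cmult_le z w :
  Rabs (Re (Cmult z w)) <= (Cnorm2 z + Cnorm2 w) / 2 /\
  Rabs (Im (Cmult z w)) <= (Cnorm2 z + Cnorm2 w) / 2.
Proof.
  pose proof (Cnorm2_mult z w). pose proof (pow2_ge_0 (Re (Cmult z w))).
  pose proof (pow2_ge_0 (Im (Cmult z w))).
  split; apply Rabs_le_half_sum; try apply Cnorm2_ge0; lra.
Qed.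

Lemma is_HS_Cnorm2 T : is_HS T <-> summable2 (fun i j => Cnorm2 (T i j)).
Proof.
  rewrite <- (dseq_ext _ _ (fun i j => Cmod_sqr (T i j))). reflexivity.
Qed.

Lemma is_l2_Cnorm2 x : is_l2 x -> ex_series (fun i => Cnorm2 (x i)).
Proof. apply ex_series_ext. intros i. apply Cmod_sqr. Qed.

(* Coordinate [m = 2p+1] (resp. [2p+2]) of a block is the real (resp. imaginary) part
   of the entry at distance [p+1] from the diagonal. *)
Lemma block_index_odd p : Nat.odd (2 * p + 1) = true /\ ((2 * p + 1 + 1) / 2 = S p)%nat.
Proof.
  split.
  - apply Nat.odd_odd.
  - replace (2 * p + 1 + 1)%nat with (S p * 2)%nat by lia. apply Nat.div_mul. lia.
Qed.

Lemma block_index_even p : Nat.odd (2 * p + 2) = false /\ ((2 * p + 2 + 1) / 2 = S p)%nat.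
Proof.
  split.
  - replace (2 * p + 2)%nat with (2 * S p)%nat by lia. apply Nat.odd_even.
  - replace (2 * p + 2 + 1)%nat with (1 + S p * 2)%nat by lia. rewrite Nat.div_add by lia. reflexivity.
Qed.

Lemma block_index_cases m : m = 0%nat \/ exists p, m = (2 * p + 1)%nat \/ m = (2 * p + 2)%nat.
Proof.
  destruct m as [|m]; [left; reflexivity|right].
  destruct (Nat.Even_or_Odd m) as [[p Hp]|[p Hp]]; exists p; lia.
Qed.

Lemma tilde_0 x n : tilde x n 0 = Cnorm2 (x n).
Proof. apply Cmod_sqr. Qed.

Lemma tilde_odd x n p : tilde x n (2 * p + 1) = Re (Cmult (Cconj (x n)) (x (n + 1 + p)%nat)).
Proof.
  destruct (block_index_odd p) as [h1 h2]. replace (2 * p + 1)%nat with (S (2 * p)) in * by lia.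
  unfold tilde. rewrite h1, h2. replace (n + S p)%nat with (n + 1 + p)%nat by lia. reflexivity.
Qed.

Lemma tilde_even x n p : tilde x n (2 * p + 2) = Im (Cmult (Cconj (x n)) (x (n + 1 + p)%nat)).
Proof.
  destruct (block_index_even p) as [h1 h2]. replace (2 * p + 2)%nat with (S (S (2 * p))) in * by lia.
  unfold tilde. rewrite h1, h2. replace (n + S p)%nat with (n + 1 + p)%nat by lia. reflexivity.
Qed.

Definition hs_vec (T : nat -> nat -> C) (n m : nat) : R :=
  match m with
  | O => Re (T n n)
  | S _ =>
      let p := Nat.div (m + 1) 2 in
      if Nat.odd m then 2 * Re (T n (n + p)%nat) else - (2 * Im (T n (n + p)%nat))
  end.

Lemma hs_vec_0 T n : hs_vec T n 0 = Re (T n n).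
Proof. reflexivity. Qed.

Lemma hs_vec_odd T n p : hs_vec T n (2 * p + 1) = 2 * Re (T n (n + 1 + p)%nat).
Proof.
  destruct (block_index_odd p) as [h1 h2]. replace (2 * p + 1)%nat with (S (2 * p)) in * by lia.
  unfold hs_vec. rewrite h1, h2. replace (n + S p)%nat with (n + 1 + p)%nat by lia. reflexivity.
Qed.

Lemma hs_vec_even T n p : hs_vec T n (2 * p + 2) = - (2 * Im (T n (n + 1 + p)%nat)).
Proof.
  destruct (block_index_even p) as [h1 h2]. replace (2 * p + 2)%nat with (S (S (2 * p))) in * by lia.
  unfold hs_vec. rewrite h1, h2. replace (n + S p)%nat with (n + 1 + p)%nat by lia. reflexivity.
Qed.

(* Inverse of [hs_vec]: the self-adjoint matrix whose upper triangle is read off [w]. *)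
Definition hs_of_vec (w : nat -> nat -> R) (i j : nat) : C :=
  if Nat.eqb i j then (w i 0%nat, 0)
  else if Nat.ltb i j then (w i (2 * (j - i) - 1)%nat / 2, - (w i (2 * (j - i))%nat / 2))
  else (w j (2 * (i - j) - 1)%nat / 2, w j (2 * (i - j))%nat / 2).

Lemma hs_of_vec_selfadjoint w : is_selfadjoint (hs_of_vec w).
Proof.
  intros i j. unfold hs_of_vec, Cconj.
  destruct (Nat.eqb_spec i j), (Nat.eqb_spec j i), (Nat.ltb_spec i j), (Nat.ltb_spec j i);
    try lia; subst; simpl; f_equal; ring.
Qed.

Lemma hs_of_vec_upper w n p :
  hs_of_vec w n (n + 1 + p)%nat = (w n (2 * p + 1)%nat / 2, - (w n (2 * p + 2)%nat / 2)).
Proof.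
  unfold hs_of_vec. destruct (Nat.eqb_spec n (n + 1 + p)); [lia|].
  destruct (Nat.ltb_spec n (n + 1 + p)); [|lia].
  replace (2 * (n + 1 + p - n) - 1)%nat with (2 * p + 1)%nat by lia.
  replace (2 * (n + 1 + p - n))%nat with (2 * p + 2)%nat by lia. reflexivity.
Qed.

Lemma hs_vec_hs_of_vec w n m : hs_vec (hs_of_vec w) n m = w n m.
Proof.
  destruct (block_index_cases m) as [->|[p [->| ->]]].
  - rewrite hs_vec_0. unfold hs_of_vec. rewrite Nat.eqb_refl. reflexivity.
  - rewrite hs_vec_odd, hs_of_vec_upper. unfold Re. simpl. field.
  - rewrite hs_vec_even, hs_of_vec_upper. unfold Im. simpl. field.
Qed.

Lemma hs_vec_eq0 T : is_selfadjoint T -> (forall n m, hs_vec T n m = 0) -> forall i j, T i j = 0%C.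
Proof.
  intros Hsa Hv.
  assert (Hupper : forall i p, T i (i + 1 + p)%nat = 0%C).
  { intros i p. pose proof (Hv i (2 * p + 1)%nat) as h1. pose proof (Hv i (2 * p + 2)%nat) as h2.
    rewrite hs_vec_odd in h1. rewrite hs_vec_even in h2.
    destruct (T i (i + 1 + p)%nat) as [a b]. unfold Re, Im in *. simpl in *.
    apply injective_projections; simpl; lra. }
  intros i j. destruct (Nat.lt_total i j) as [h|[->|h]].
  - replace j with (i + 1 + (j - i - 1))%nat by lia. apply Hupper.
  - pose proof (Hv j 0%nat) as h0. rewrite hs_vec_0 in h0. pose proof (Hsa j j) as hs.
    destruct (T j j) as [a b]. unfold Cconj in hs. simpl in *. injection hs. intros.
    apply injective_projections; simpl; lra.
  - rewrite Hsa. replace i with (j + 1 + (i - j - 1))%nat by lia. rewrite Hupper.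
    apply injective_projections; simpl; ring.
Qed.

Lemma in_Htilde_of_block_bound (v g : nat -> nat -> R) c : 0 <= c ->
  (forall i j, 0 <= g i j) -> summable2 g ->
  (forall n, v n 0%nat ^ 2 <= c * g n n) ->
  (forall n p, v n (2 * p + 1)%nat ^ 2 + v n (2 * p + 2)%nat ^ 2
               <= c * (g n (n + 1 + p)%nat + g (n + 1 + p)%nat n)) ->
  in_Htilde v.
Proof.
  intros Hc Hg Hgs Hdiag Hpair.
  set (diag := fun N n => g n n + fsum (fun p => g n (n + 1 + p)%nat + g (n + 1 + p)%nat n) (N - 1 - n)).
  assert (Hdiag_ge0 : forall N n, 0 <= diag N n).
  { intros N n. unfold diag. pose proof (Hg n n).
    assert (0 <= fsum (fun p => g n (n + 1 + p)%nat + g (n + 1 + p)%nat n) (N - 1 - n)); [|lra].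
    apply fsum_nonneg. intros p _. pose proof (Hg n (n + 1 + p)%nat).
    pose proof (Hg (n + 1 + p)%nat n). lra. }
  apply (summable2_of_bounded_fsum2 (fun n m => v n m ^ 2) (c * Series (fun i => Series (g i))));
    [intros; apply pow2_ge_0|].
  intros N. apply (Rle_trans _ (fsum (fun n => fsum (fun m => v n m ^ 2) (2 * N + 1)) N)).
  { apply fsum_le. intros n _. apply fsum_le_len; [intros; apply pow2_ge_0|lia]. }
  apply (Rle_trans _ (c * fsum (diag (2 * N)%nat) N)).
  { rewrite <- fsum_scal_l. apply fsum_le. intros n Hn. rewrite fsum_odd_len.
    unfold diag. rewrite Rmult_plus_distr_l. apply Rplus_le_compat; [apply Hdiag|].
    rewrite <- fsum_scal_l. eapply Rle_trans; [apply fsum_le; intros p _; apply Hpair|].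
    apply fsum_le_len; [|lia].
    intros p. pose proof (Hg n (n + 1 + p)%nat). pose proof (Hg (n + 1 + p)%nat n). nra. }
  apply Rmult_le_compat_l; [exact Hc|].
  apply (Rle_trans _ (fsum (diag (2 * N)%nat) (2 * N))); [apply fsum_le_len; [apply Hdiag_ge0|lia]|].
  unfold diag. rewrite <- fsum_square_diag. apply fsum2_le_Series2; auto.
Qed.

Lemma in_Htilde_hs_vec T : is_HS T -> is_selfadjoint T -> in_Htilde (hs_vec T).
Proof.
  intros HT Hsa. apply is_HS_Cnorm2 in HT.
  apply (in_Htilde_of_block_bound _ (fun i j => Cnorm2 (T i j)) 2);
    [lra|intros; apply Cnorm2_ge0|exact HT| |].
  - intros n. rewrite hs_vec_0. unfold Cnorm2, Re. pose proof (pow2_ge_0 (fst (T n n))).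
    pose proof (pow2_ge_0 (snd (T n n))). lra.
  - intros n p. rewrite hs_vec_odd, hs_vec_even, (Hsa (n + 1 + p)%nat n), Cnorm2_conj.
    unfold Cnorm2, Re, Im. lra.
Qed.

Lemma summable2_Cnorm2_prod x : is_l2 x -> summable2 (fun i j => Cnorm2 (x i) * Cnorm2 (x j)).
Proof.
  intros Hx. apply is_l2_Cnorm2 in Hx. split.
  - intros i. apply (ex_series_scal_l (Cnorm2 (x i)) _ Hx).
  - apply (ex_series_ext (fun i => Series (fun j => Cnorm2 (x j)) * Cnorm2 (x i))).
    + intros i. rewrite Rmult_comm, <- Series_scal_l. reflexivity.
    + apply (ex_series_scal_l (Series (fun j => Cnorm2 (x j))) _ Hx).
Qed.

Lemma in_Htilde_tilde x : is_l2 x -> in_Htilde (tilde x).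
Proof.
  intros Hx.
  apply (in_Htilde_of_block_bound _ (fun i j => Cnorm2 (x i) * Cnorm2 (x j)) 1);
    [lra| |apply summable2_Cnorm2_prod, Hx| |].
  - intros i j. apply Rmult_le_pos; apply Cnorm2_ge0.
  - intros n. rewrite tilde_0. lra.
  - intros n p. rewrite tilde_odd, tilde_even, Cnorm2_mult, Cnorm2_conj.
    pose proof (Cnorm2_ge0 (x n)). pose proof (Cnorm2_ge0 (x (n + 1 + p)%nat)). nra.
Qed.

Lemma is_HS_hs_of_vec w : in_Htilde w -> is_HS (hs_of_vec w).
Proof.
  intros Hw. apply is_HS_Cnorm2.
  apply (summable2_of_bounded_fsum2 _ (Hnorm2 w)); [intros; apply Cnorm2_ge0|].
  intros N. rewrite (fsum_square_diag (fun i j => Cnorm2 (hs_of_vec w i j))).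
  eapply Rle_trans;
    [|apply (fsum2_le_Series2 (fun n m => w n m ^ 2) N (fun n => 2 * (N - 1 - n) + 1)%nat);
                        [intros; apply pow2_ge_0|exact Hw]].
  apply fsum_le. intros n _. rewrite fsum_odd_len. apply Rplus_le_compat.
  - unfold hs_of_vec. rewrite Nat.eqb_refl. unfold Cnorm2. simpl. lra.
  - apply fsum_le. intros p _.
    rewrite (hs_of_vec_selfadjoint w (n + 1 + p)%nat n), Cnorm2_conj, hs_of_vec_upper.
    unfold Cnorm2. simpl. pose proof (pow2_ge_0 (w n (2 * p + 1)%nat)).
    pose proof (pow2_ge_0 (w n (2 * p + 2)%nat)).
    nra.
Qed.

(** * The quadratic form [<T x, x>] as an inner product in [Htilde] *)

Definition quad_term (T : nat -> nat -> C) (x : nat -> C) (i j : nat) : C :=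
  Cmult (Cconj (x i)) (Cmult (T i j) (x j)).

Section QuadraticForm.

Variables (T : nat -> nat -> C) (x : nat -> C).
Hypotheses (HT : is_HS T) (Hx : is_l2 x).

Lemma ex_series_Re_Im_row i :
  ex_series (fun j => Re (Cmult (T i j) (x j))) /\ ex_series (fun j => Im (Cmult (T i j) (x j))).
Proof.
  apply is_HS_Cnorm2 in HT. apply is_l2_Cnorm2 in Hx.
  assert (Hb : ex_series (fun j => / 2 * Cnorm2 (T i j) + / 2 * Cnorm2 (x j)))
    by (apply ex_series_lin2; [apply HT|exact Hx]).
  split; (eapply ex_series_Rle; [|exact Hb]); intros j;
    destruct (Rabs_Re_Im_Cmult_le (T i j) (x j)); lra.
Qed.

Lemma abs_summable2_quad_term :
  abs_summable2 (fun i j => Re (quad_term T x i j)) /\ abs_summable2 (fun i j => Im (quad_term T x i j)).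
Proof.
  assert (Hb : summable2 (fun i j => / 2 * Cnorm2 (T i j) + / 2 * (Cnorm2 (x i) * Cnorm2 (x j)))).
  { apply summable2_lin2; [apply is_HS_Cnorm2, HT|apply summable2_Cnorm2_prod, Hx]. }
  assert (Hsq : forall i j, Re (quad_term T x i j) ^ 2 + Im (quad_term T x i j) ^ 2
                            = Cnorm2 (T i j) * (Cnorm2 (x i) * Cnorm2 (x j))).
  { intros i j. unfold quad_term. rewrite Cnorm2_mult, Cnorm2_conj. unfold Cnorm2 at 2.
    fold (Re (Cmult (T i j) (x j))) (Im (Cmult (T i j) (x j))). rewrite Cnorm2_mult. ring. }
  assert (Hnn : forall i j, 0 <= Cnorm2 (T i j) /\ 0 <= Cnorm2 (x i) * Cnorm2 (x j)).
  { intros i j. split; [|apply Rmult_le_pos]; apply Cnorm2_ge0. }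
  split; (eapply abs_summable2_le; [|exact Hb]); intros i j;
    specialize (Hsq i j); destruct (Hnn i j);
    pose proof (pow2_ge_0 (Re (quad_term T x i j))); pose proof (pow2_ge_0 (Im (quad_term T x i j)));
    (eapply Rle_trans;
       [apply (Rabs_le_half_sum _ (Cnorm2 (T i j)) (Cnorm2 (x i) * Cnorm2 (x j))); auto; lra|lra]).
Qed.

Lemma l2inner_op_apply_Series2 : l2inner (op_apply T x) x =
  (Series (fun i => Series (fun j => Re (quad_term T x i j))),
   Series (fun i => Series (fun j => Im (quad_term T x i j)))).
Proof.
  unfold l2inner, op_apply, Cseries. f_equal; apply Series_ext; intros i;
    destruct (ex_series_Re_Im_row i) as [HRe HIm].
  - rewrite (Series_ext (fun j => Re (quad_term T x i j))
      (fun j => fst (x i) * Re (Cmult (T i j) (x j)) + snd (x i) * Im (Cmult (T i j) (x j)))).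
    + rewrite Series_lin2 by assumption. destruct (x i). unfold Re, Im, Cmult, Cconj. simpl. ring.
    + intros j. unfold quad_term. destruct (T i j), (x i), (x j). unfold Re, Im, Cmult, Cconj.
      simpl. ring.
  - rewrite (Series_ext (fun j => Im (quad_term T x i j))
      (fun j => fst (x i) * Im (Cmult (T i j) (x j)) + (- snd (x i)) * Re (Cmult (T i j) (x j)))).
    + rewrite Series_lin2 by assumption. destruct (x i). unfold Re, Im, Cmult, Cconj. simpl. ring.
    + intros j. unfold quad_term. destruct (T i j), (x i), (x j). unfold Re, Im, Cmult, Cconj.
      simpl. ring.
Qed.

Hypothesis Hsa : is_selfadjoint T.

(* Grouped by diagonals, each term [quad_term i j + quad_term j i] is real. *)
Lemma Series2_Im_quad_term : Series (fun i => Series (fun j => Im (quad_term T x i j))) = 0.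
Proof.
  apply (Series2_eq_lim_diag _ 0 (proj2 abs_summable2_quad_term)).
  apply (is_lim_seq_ext (fun _ => 0)); [|apply is_lim_seq_const].
  intros N. rewrite <- (Rmult_0_r (INR N)), <- fsum_const. apply fsum_ext. intros n _.
  rewrite (fsum_ext _ (fun _ => 0)), fsum_const.
  - pose proof (Hsa n n) as Hnn. unfold quad_term. destruct (T n n) as [t1 t2], (x n).
    unfold Cconj in Hnn. injection Hnn. intros. unfold Im, Cmult, Cconj. simpl. nra.
  - intros p _. unfold quad_term. rewrite (Hsa (n + 1 + p)%nat n).
    destruct (T n (n + 1 + p)%nat), (x n), (x (n + 1 + p)%nat). unfold Im, Cmult, Cconj. simpl. ring.
Qed.

Lemma Series2_Re_quad_term :
  Series (fun i => Series (fun j => Re (quad_term T x i j))) = Hinner (hs_vec T) (tilde x).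
Proof.
  apply (Series2_eq_lim_diag _ _ (proj1 abs_summable2_quad_term)).
  eapply is_lim_seq_ext;
    [|apply (is_lim_seq_fsum2 _ (fun N n => 2 * (N - 1 - n) + 1)%nat
               (abs_summable2_mul _ _ (in_Htilde_hs_vec T HT Hsa) (in_Htilde_tilde x Hx)))].
  - intros N. apply fsum_ext. intros n _. rewrite fsum_odd_len. f_equal.
    + rewrite hs_vec_0, tilde_0. unfold quad_term. destruct (T n n), (x n).
      unfold Cnorm2, Re, Cmult, Cconj. simpl. ring.
    + apply fsum_ext. intros p _.
      rewrite hs_vec_odd, hs_vec_even, tilde_odd, tilde_even. unfold quad_term.
      rewrite (Hsa (n + 1 + p)%nat n).
      destruct (T n (n + 1 + p)%nat), (x n), (x (n + 1 + p)%nat). unfold Re, Im, Cmult, Cconj.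
      simpl. ring.
  - intros n P [M HM]. exists (n + 1 + M)%nat. intros N HN. apply HM. lia.
Qed.

End QuadraticForm.

Lemma l2inner_op_apply T x : is_HS T -> is_selfadjoint T -> is_l2 x ->
  l2inner (op_apply T x) x = (Hinner (hs_vec T) (tilde x), 0).
Proof.
  intros HT Hsa Hx.
  rewrite l2inner_op_apply_Series2, Series2_Im_quad_term, Series2_Re_quad_term; auto.
Qed.

Section Equivalence.

Variable X : nat -> (nat -> C).
Hypothesis HX : forall k, is_l2 (X k).

Let Y := fun k => tilde (X k).

Let HY : forall k, in_Htilde (Y k).
Proof. intros k. apply in_Htilde_tilde, HX. Qed.

(* A nonzero vector orthogonal to every [tilde (X k)] is the vector of a nonzero matrix
   with vanishing quadratic form on the family. *)
Lemma dense_span_of_injective : injective_family X -> dense_span_Htilde Y.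
Proof.
  intros Hinj v Hv eps Heps. apply NNPP. intros Hnot.
  assert (Hfar : forall u, in_span Y u -> eps ^ 2 <= Hnorm2 (fun n m => v n m - u n m)).
  { intros u [c [N ->]]. apply Rnot_lt_le. intros Hlt. apply Hnot.
    destruct (lincomb_sum_n Y c N) as [c' Hc']. exists N, c'.
    rewrite (dseq_ext _ (fun n m => v n m - lincomb Y c N n m)) by (intros; rewrite Hc'; reflexivity).
    apply Htilde_norm_lt_iff; auto. apply in_Htilde_sub; [exact Hv|apply lincomb_in_Htilde, HY]. }
  destruct (exists_orthogonal_of_far Y v HY Hv eps Heps Hfar) as [w [Hw [Hpos Horth]]].
  assert (Hvec : hs_vec (hs_of_vec w) = w) by (apply dseq_ext, hs_vec_hs_of_vec).
  assert (Hzero : forall i j, hs_of_vec w i j = 0%C).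
  { apply Hinj; [apply is_HS_hs_of_vec, Hw|apply hs_of_vec_selfadjoint|].
    intros k. rewrite l2inner_op_apply, Hvec;
      [|apply is_HS_hs_of_vec, Hw|apply hs_of_vec_selfadjoint|apply HX].
    fold (Y k). rewrite Horth. reflexivity. }
  assert (Hw0 : Hnorm2 w = 0).
  { rewrite <- Hvec, (Hnorm2_ext _ (fun n m => 0 * w n m)), Hnorm2_scal; [ring|].
    intros n m. unfold hs_vec.
    destruct m as [|m]; [|destruct (Nat.odd (S m))]; rewrite Hzero; simpl; ring. }
  lra.
Qed.

Lemma injective_of_dense_span : dense_span_Htilde Y -> injective_family X.
Proof.
  intros Hd T HT Hsa Hk. set (v := hs_vec T).
  assert (Hv : in_Htilde v) by (apply in_Htilde_hs_vec; auto).
  assert (Horth : forall k, Hinner v (Y k) = 0).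
  { intros k. specialize (Hk k). rewrite l2inner_op_apply in Hk by auto. injection Hk. auto. }
  assert (Hsmall : forall eps, 0 < eps -> Hnorm2 v < eps ^ 2).
  { intros eps Heps. destruct (Hd v Hv eps Heps) as [N [c Hc]].
    rewrite (dseq_ext _ (fun n m => v n m - lincomb Y c (S N) n m)) in Hc
      by (intros; rewrite sum_n_fsum; reflexivity).
    assert (Hu : in_Htilde (lincomb Y c (S N))) by (apply lincomb_in_Htilde, HY).
    apply Htilde_norm_lt_iff in Hc; [|apply in_Htilde_sub; auto|exact Heps].
    rewrite Hnorm2_sub_orth in Hc; auto.
    - pose proof (Hnorm2_ge0 _ Hu). lra.
    - rewrite Hinner_lincomb by auto. rewrite (fsum_ext _ (fun _ => 0)) by (intros; rewrite Horth; ring).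
      rewrite fsum_const. ring. }
  assert (Hv0 : Hnorm2 v = 0).
  { destruct (Hnorm2_ge0 v Hv) as [Hlt|]; [|auto].
    specialize (Hsmall _ (sqrt_lt_R0 _ Hlt)). rewrite pow2_sqrt in Hsmall; lra. }
  apply hs_vec_eq0; auto. apply Hnorm2_eq0; auto.
Qed.

End Equivalence.

Theorem mainTheorem12 (X : nat -> (nat -> C)) :
  is_frame X ->
  (injective_family X <-> dense_span_Htilde (fun k => tilde (X k))).
Proof.
  intros [HX _]. split.
  - apply dense_span_of_injective, HX.
  - apply injective_of_dense_span, HX.
Qed.
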